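(* Let $n\ge 2$. Every $1$-Costas permutation $\pi$ of $\{1,\ldots,n\}$ satisfies $\delta(\pi)\ge\lceil n/2\rceil$, and there exists a $1$-Costas permutation $\pi^*$ of $\{1,\ldots,n\}$ with $\delta(\pi^* )=\lceil n/2\rceil$. Such a $\pi^*$ is given, according to the parity of $n$, by the permutation matrix: (i) if $n=2k$: $P_{\pi^*}=\Pi_k\oplus L_k\Pi_k$; (ii) if $n=2k+1$ with $k$ even: $P_{\pi^*}=\begin{bmatrix} O & L_{k+1}\Pi_{k+1}\\ \Pi_k & O\end{bmatrix}$; (iii) if $n=2k+1$ with $k$ odd: $P_{\pi^*}=\begin{bmatrix} O & L_{k+1}\Pi_{k+1}L_{k+1}\\ \Pi_k L_k & O\end{bmatrix}$. Moreover, in each case $\pi^*$ attains the minimum of the global variation $\Delta(\pi)$ over all $1$-Costas permutations $\pi$ of $\{1,\ldots,n\}$, and this minimum equals $n^2/4$ if $n$ is even and $(n^2+3)/4$ if $n$ is odd.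
   Context: For a permutation $\pi=(\pi_1,\ldots,\pi_n)$ of $\{1,\ldots,n\}$: its discrete derivative is $D(\pi)=(\pi_2-\pi_1,\ldots,\pi_n-\pi_{n-1})$; its local variation is $\delta(\pi)=\max_i|\pi_{i+1}-\pi_i|$; its global variation is $\Delta(\pi)=\sum_{i=1}^{n-1}|\pi_{i+1}-\pi_i|$. $\pi$ is $1$-Costas if the $n-1$ entries of $D(\pi)$ are pairwise distinct. $P_\pi$ is the $n\times n$ permutation matrix with $1$ in positions $(i,\pi_i)$ and $0$ elsewhere. $L_m$ is the $m\times m$ backward identity matrix (ones in positions $(i,m+1-i)$), so $L_mP$ reverses the order of the rows of $P$ and $PL_m$ reverses the order of its columns. For $m\ge1$, $\Pi_m=P_{\pi_{(m)}}$ where $\pi_{(m)}$ is the permutation of $\{1,\ldots,m\}$ defined by: if $m=2p$, $\pi_{(m)}=(p,p+1,p-1,p+2,p-2,\ldots,1,2p)$, i.e. $\pi_{(m)}(2j-1)=p+1-j$, $\pi_{(m)}(2j)=p+j$ for $1\le j\le p$; if $m=2p+1$, $\pi_{(m)}=(p+1,p+2,p,p+3,p-1,\ldots,2p+1,1)$, i.e. $\pi_{(m)}(2j-1)=p+2-j$ for $1\le j\le p+1$ and $\pi_{(m)}(2j)=p+1+j$ for $1\le j\le p$. (Its derivative is $(1,-2,3,-4,\ldots)$.) $A\oplus B$ denotes the block diagonal matrix; in (ii),(iii) the block $L_{k+1}\Pi_{k+1}$ (resp. $L_{k+1}\Pi_{k+1}L_{k+1}$) occupies rows $1,\ldots,k+1$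 and columns $k+1,\ldots,2k+1$, the $k\times k$ block occupies rows $k+2,\ldots,2k+1$ and columns $1,\ldots,k$, and $O$ denotes zero blocks. *)

From mathcomp Require Import all_boot all_order all_algebra all_fingroup.
Set Implicit Arguments. Unset Strict Implicit. Unset Printing Implicit Defensive.
Import GRing.Theory Num.Theory.

(* A permutation of {1,...,n} is represented by p : 'S_n, acting on 'I_n =
   {0,...,n-1}; entry pi_{i+1} of the paper corresponds to (p i) + 1.
   Differences are unaffected by this shift. *)

Definition pv n (p : 'S_n) (i : nat) : nat :=
  nth 0%N [seq (p j : nat) | j <- enum 'I_n] i.

Definition dderiv n (p : 'S_n) : seq int :=
  [seq ((pv p i.+1)%:Z - (pv p i)%:Z)%R | i <- iota 0 n.-1].

Definition costas1 n (p : 'S_n) : bool := uniq (dderiv p).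

Definition locvar n (p : 'S_n) : nat := \max_(d <- dderiv p) absz d.

Definition globvar n (p : 'S_n) : nat := \sum_(d <- dderiv p) absz d.

(* pi_(m) : 1-based position t |-> 1-based value *)
Definition piM (m t : nat) : nat :=
  let p := m./2 in
  if ~~ odd m then (if odd t then p.+1 - t.+1./2 else p + t./2)
  else (if odd t then p + 2 - t.+1./2 else p.+1 + t./2).

Definition PiMx (m : nat) : 'M[int]_m :=
  \matrix_(i < m, j < m) ((piM m i.+1 == j.+1)%:R)%R.

Definition Lmx (m : nat) : 'M[int]_m :=
  \matrix_(i < m, j < m) ((i + j == m.-1)%N%:R)%R.

Definition Pmx n (p : 'S_n) : 'M[int]_n := perm_mx p.

(* The derivative D(pi) consists of n - 1 distinct nonzero integers whose sum
   pi_n - pi_1 is nonzero.  At most 2M distinct nonzero integers have absolute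
   value at most M, and exactly 2M only if they are +-1, ..., +-M, whose sum is
   0; hence n - 1 < 2 delta(pi).  Repeatedly removing the entry of largest
   absolute value bounds Delta(pi) below by 1 + 1 + 2 + 2 + ..., which is n^2/4
   for even n; for odd n the nonzero sum forces one extra unit.
   The derivative of the zigzag pi_(m) is (1, -2, 3, -4, ...).  The optimal
   permutations glue two zigzags, reflected in position or in value, so that
   their derivative consists of +-1, ..., +-(k-1) together with the jump k
   (n = 2k) or the two entries k and -(k+1) (n = 2k+1): both bounds are
   attained. *)

From mathcomp Require Import all_boot all_order all_algebra all_fingroup zify.
Import GRing.Theory Num.Theory.
Set Implicit Arguments. Unset Strict Implicit.

Local Open Scope ring_scope.

Lemma subset_perm_eq (T : eqType) (s t : seq T) : uniq s -> uniq t ->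
  {subset s <= t} -> (size t <= size s)%N -> perm_eq s t.
Proof. by move=> s_uniq t_uniq s_sub /(uniq_min_size s_uniq s_sub)[_]; exact: uniq_perm. Qed.

(** * Distinct nonzero integers *)

Definition signed_iota (M : nat) : seq int :=
  [seq t%:Z | t <- iota 1 M] ++ [seq - t%:Z | t <- iota 1 M].

Lemma mem_signed_iota M x : (x \in signed_iota M) = (x != 0) && (absz x <= M)%N.
Proof.
rewrite mem_cat; apply/orP/andP => [[] /mapP[t] | [x_nz x_le]].
- by rewrite mem_iota => t_in ->; lia.
- by rewrite mem_iota => t_in ->; lia.
case: x x_nz x_le => [t|t] x_nz x_le; [left | right];
  apply/mapP; [exists t | exists t.+1]; rewrite ?mem_iota //; lia.
Qed.

Lemma uniq_signed_iota M : uniq (signed_iota M).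
Proof.
rewrite cat_uniq !map_inj_uniq ?iota_uniq ?andbT //=.
- apply/hasPn => _ /mapP[t t_in ->]; apply/negP => /mapP[u _].
  by move: t_in; rewrite mem_iota; lia.
- by move=> t u; lia.
- by move=> t u; lia.
Qed.

Lemma size_signed_iota M : size (signed_iota M) = (M + M)%N.
Proof. by rewrite size_cat !size_map size_iota. Qed.

Lemma sum_signed_iota M : \sum_(x <- signed_iota M) x = 0.
Proof. by rewrite big_cat /= !big_map sumrN subrr. Qed.

Lemma sum_absz_signed_iota M : (\sum_(x <- signed_iota M) absz x)%N = (M * M.+1)%N.
Proof.
rewrite big_cat /= !big_map /=.
under [X in (_ + X)%N]eq_bigr do rewrite abszN.
rewrite addnn; elim: M => [|M IH]; first by rewrite big_nil.
by rewrite -[M.+1]addn1 iotaD big_cat big_seq1 doubleD IH; lia.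
Qed.

Lemma max_absz_signed_iota M : (\max_(x <- signed_iota M) absz x <= M)%N.
Proof. by apply/bigmax_leqP_seq => x; rewrite mem_signed_iota => /andP[]. Qed.

Lemma sum_full_signed_iota (s : seq int) M : uniq s -> {subset s <= signed_iota M} ->
  size s = (M + M)%N -> \sum_(x <- s) x = 0.
Proof.
move=> s_uniq s_sub s_size.
have s_perm : perm_eq s (signed_iota M).
  by apply: subset_perm_eq; rewrite ?uniq_signed_iota ?size_signed_iota ?s_size.
by rewrite (perm_big _ s_perm) sum_signed_iota.
Qed.

Lemma exists_absz_max (s : seq int) :
  s != [::] -> exists2 x, x \in s & {in s, forall y, absz y <= absz x}%N.
Proof.
case: s => // x0 s' _; set s := x0 :: s'.
have [i _ i_max] :=
  @arg_maxnP _ (ord0 : 'I_(size s)) xpredT (fun i => absz (nth 0 s i)) isT.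
exists (nth 0 s i); first exact: mem_nth.
by move=> y /(nthP 0)[j j_lt <-]; exact: (i_max (Ordinal j_lt)).
Qed.

Definition min_absz_sum (m : nat) : nat := \sum_(i < m) (i./2).+1.

Lemma min_absz_sumS m : min_absz_sum m.+1 = (min_absz_sum m + (m./2).+1)%N.
Proof. exact: big_ord_recr. Qed.

Lemma min_absz_sum_odd j : min_absz_sum (j + j).+1 = (j.+1 * j.+1)%N.
Proof.
elim: j => [|j IH]; first by rewrite /min_absz_sum big_ord1.
rewrite addSn addnS 2!min_absz_sumS IH; lia.
Qed.

Lemma min_absz_sum_le (s : seq int) : uniq s -> 0 \notin s ->
  (min_absz_sum (size s) <= \sum_(x <- s) absz x)%N.
Proof.
move s_size: (size s) => m; elim: m s s_size => [|m IH] s s_size s_uniq s_nz.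
  by rewrite /min_absz_sum big_ord0.
have [|x x_in x_max] := @exists_absz_max s; first by rewrite -size_eq0 s_size.
have s_sub : {subset s <= signed_iota (absz x)}.
  move=> y y_in; rewrite mem_signed_iota x_max // andbT.
  by apply: contraNneq s_nz => <-.
have := uniq_leq_size s_uniq s_sub; rewrite size_signed_iota s_size => size_le.
have size_rest : size (rem x s) = m by rewrite size_rem // s_size.
have rest := IH _ size_rest (rem_uniq x s_uniq) (contra (@mem_rem _ x s 0) s_nz).
by rewrite (perm_big _ (perm_to_rem x_in)) big_cons /= min_absz_sumS; lia.
Qed.

Lemma sum_absz_ge_of_sum_neq0 (s : seq int) k : size s = (k + k)%N -> uniq s ->
  0 \notin s -> \sum_(x <- s) x != 0 -> (k * k.+1 + 1 <= \sum_(x <- s) absz x)%N.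
Proof.
move=> s_size s_uniq s_nz s_sum.
have [|x x_in x_max] := @exists_absz_max s.
  by apply: contraNneq s_sum => ->; rewrite big_nil.
have x_big : (k < absz x)%N.
  rewrite ltnNge; apply: contra s_sum => x_le.
  apply/eqP/(sum_full_signed_iota s_uniq _ s_size) => y y_in.
  rewrite mem_signed_iota (leq_trans (x_max y y_in) x_le) andbT.
  by apply: contraNneq s_nz => <-.
have k_gt0 : (0 < k)%N by case: (k) s_size x_in => // /size0nil ->.
have := min_absz_sum_le (rem_uniq x s_uniq) (contra (@mem_rem _ x s 0) s_nz).
rewrite size_rem // s_size (_ : (k + k).-1 = (k.-1 + k.-1).+1); last by lia.
rewrite min_absz_sum_odd prednK // (perm_big _ (perm_to_rem x_in)) big_cons /=.
lia.
Qed.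

(** * Discrete derivatives *)

Definition diffs (s : seq nat) : seq int :=
  pairmap (fun a b => b%:Z - a%:Z) (head 0%N s) (behead s).

Lemma diffsE (s : seq nat) :
  diffs s = [seq (nth 0 s i.+1)%:Z - (nth 0 s i)%:Z | i <- iota 0 (size s).-1].
Proof.
case: s => [//|x s]; apply: (@eq_from_nth _ 0).
  by rewrite size_pairmap size_map size_iota.
move=> i; rewrite size_pairmap => i_lt.
by rewrite (nth_pairmap 0%N) // (nth_map 0%N) ?size_iota // nth_iota.
Qed.

Lemma diffs_cons2 x y s : diffs [:: x, y & s] = (y%:Z - x%:Z) :: diffs (y :: s).
Proof. by []. Qed.

Lemma size_diffs s : size (diffs s) = (size s).-1.
Proof. by rewrite diffsE size_map size_iota. Qed.

Lemma diffs_cat s1 s2 : s1 != [::] -> s2 != [::] ->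
  diffs (s1 ++ s2) = diffs s1 ++ ((head 0%N s2)%:Z - (last 0%N s1)%:Z) :: diffs s2.
Proof. by case: s1 => // x s1 _; case: s2 => // y s2 _; rewrite /diffs /= pairmap_cat. Qed.

Lemma diffs_map (f : nat -> nat) (g : int -> int) s :
  {in s &, forall x y, (f y)%:Z - (f x)%:Z = g (y%:Z - x%:Z)} ->
  diffs (map f s) = map g (diffs s).
Proof.
elim: s => [//|x s IH] fg; case: s IH fg => [//|y s] IH fg.
have fg_tail : {in y :: s &, forall a b, (f b)%:Z - (f a)%:Z = g (b%:Z - a%:Z)}.
  by move=> a b a_in b_in; apply: fg; rewrite inE ?a_in ?b_in orbT.
by rewrite !map_cons diffs_cons2 fg ?inE ?eqxx ?orbT // -(IH fg_tail).
Qed.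

Lemma diffs_map_addn c s : diffs (map (addn c) s) = diffs s.
Proof. by rewrite (@diffs_map _ id) ?map_id // => x y _ _; lia. Qed.

Lemma diffs_map_subn c s : {in s, forall v, v <= c}%N ->
  diffs (map (subn c) s) = map -%R (diffs s).
Proof. by move=> s_le; apply: diffs_map => x y /s_le x_le /s_le y_le; lia. Qed.

Lemma diffs_rev s : diffs (rev s) = rev (map -%R (diffs s)).
Proof.
elim: s => [//|x s IH]; case: s IH => [//|y s] IH.
rewrite rev_cons -cats1 diffs_cat -?size_eq0 ?size_rev // IH rev_cons last_rcons.
by rewrite diffs_cons2 map_cons rev_cons -cats1 opprB.
Qed.

Lemma sum_diffs s : \sum_(d <- diffs s) d = (last 0%N s)%:Z - (head 0%N s)%:Z.
Proof.
elim: s => [|x s IH]; first by rewrite big_nil subrr.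
case: s IH => [|y s] IH; first by rewrite big_nil subrr.
by rewrite diffs_cons2 big_cons IH /= addrC addrA subrK.
Qed.

Lemma diffs_neq0 s : uniq s -> 0 \notin diffs s.
Proof.
elim: s => [//|x s IH]; case: s IH => [//|y s] IH /andP[x_notin ys_uniq].
rewrite diffs_cons2 in_cons negb_or IH // andbT.
by apply: contra x_notin; rewrite eq_sym subr_eq0 => /eqP[->]; rewrite mem_head.
Qed.

Definition perm_vals n (p : 'S_n) : seq nat := [seq (p i : nat) | i <- enum 'I_n].

Lemma size_perm_vals n (p : 'S_n) : size (perm_vals p) = n.
Proof. by rewrite size_map size_enum_ord. Qed.

Lemma nth_perm_vals n (p : 'S_n) (i : 'I_n) : nth 0%N (perm_vals p) i = p i.
Proof. by rewrite (nth_map i) ?size_enum_ord // nth_ord_enum. Qed.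

Lemma uniq_perm_vals n (p : 'S_n) : uniq (perm_vals p).
Proof. by rewrite map_inj_uniq ?enum_uniq // => i j /val_inj /perm_inj. Qed.

Lemma dderiv_diffs n (p : 'S_n) : dderiv p = diffs (perm_vals p).
Proof. by rewrite diffsE size_perm_vals. Qed.

Lemma perm_of_seq n (s : seq nat) : perm_eq s (iota 0 n) ->
  exists p : 'S_n, perm_vals p = s.
Proof.
move=> s_perm; have s_size : size s = n by rewrite (perm_size s_perm) size_iota.
have s_lt (i : 'I_n) : (nth 0%N s i < n)%N.
  have : nth 0%N s i \in iota 0 n by rewrite -(perm_mem s_perm) mem_nth ?s_size.
  by rewrite mem_iota.
have f_inj : injective (fun i => Ordinal (s_lt i)).
  move=> i j /(congr1 val) /eqP /=.
  by rewrite nth_uniq ?s_size ?(perm_uniq s_perm) ?iota_uniq // => /eqP /val_inj.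
exists (perm f_inj); apply: (@eq_from_nth _ 0%N); rewrite size_perm_vals ?s_size //.
by move=> i i_lt; rewrite -[i]/(val (Ordinal i_lt)) nth_perm_vals permE.
Qed.

Lemma dderiv_neq0 n (p : 'S_n) : 0 \notin dderiv p.
Proof. by rewrite dderiv_diffs diffs_neq0 ?uniq_perm_vals. Qed.

Lemma sum_dderiv_neq0 n (p : 'S_n) : (2 <= n)%N -> \sum_(d <- dderiv p) d != 0.
Proof.
move=> n_ge2; rewrite dderiv_diffs sum_diffs subr_eq0 eqz_nat.
have vals_size := size_perm_vals p; have vals_uniq := uniq_perm_vals p.
case: (perm_vals p) vals_size vals_uniq => [|x [|y s]] /= vals_size; try lia.
case/andP => x_notin _.
by apply: contra x_notin => /eqP <-; rewrite mem_last.
Qed.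

Lemma costas1_locvar_ge n (p : 'S_n) : (2 <= n)%N -> costas1 p ->
  (n.+1 %/ 2 <= locvar p)%N.
Proof.
move=> n_ge2 p_costas.
have sub : {subset dderiv p <= signed_iota (locvar p)}.
  move=> d d_in; rewrite mem_signed_iota [(_ <= _)%N](leq_bigmax_seq _ d_in) // andbT.
  by apply: contraNneq (dderiv_neq0 p) => <-.
have size_le := uniq_leq_size p_costas sub.
have size_neq : size (dderiv p) != (locvar p + locvar p)%N.
  apply: contra (sum_dderiv_neq0 p n_ge2) => /eqP.
  by move/(sum_full_signed_iota p_costas sub) ->.
rewrite size_signed_iota dderiv_diffs size_diffs size_perm_vals in size_le size_neq *.
lia.
Qed.

Lemma globvar_ge_even k (p : 'S_(k + k)) : (0 < k)%N -> costas1 p ->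
  (k * k <= globvar p)%N.
Proof.
move=> k_gt0 p_costas; have := min_absz_sum_le p_costas (dderiv_neq0 p).
rewrite dderiv_diffs size_diffs size_perm_vals -dderiv_diffs.
by rewrite (_ : (k + k).-1 = (k.-1 + k.-1).+1) ?min_absz_sum_odd ?prednK //; lia.
Qed.

Lemma globvar_ge_odd k (p : 'S_(k.+1 + k)) : (0 < k)%N -> costas1 p ->
  (k * k.+1 + 1 <= globvar p)%N.
Proof.
move=> k_gt0 p_costas.
apply: sum_absz_ge_of_sum_neq0 (p_costas) (dderiv_neq0 p) (sum_dderiv_neq0 p _).
  by rewrite dderiv_diffs size_diffs size_perm_vals.
lia.
Qed.

(** * The zigzag permutations *)

Lemma piM_range m t : (1 <= t <= m)%N -> (1 <= piM m t <= m)%N.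
Proof. by rewrite /piM; case: ifP => ?; case: ifP => ?; lia. Qed.

Lemma piM_inj m t t' : (1 <= t <= m)%N -> (1 <= t' <= m)%N -> piM m t = piM m t' -> t = t'.
Proof. by rewrite /piM; case: ifP => ?; case: ifP => ?; case: ifP => ?; lia. Qed.

Lemma piM1 m : piM m 1 = m.+1./2.
Proof. by rewrite /piM; case: ifP => /=; lia. Qed.

Lemma piM_step m t : (1 <= t < m)%N ->
  (piM m t.+1)%:Z - (piM m t)%:Z = if odd t then t%:Z else - t%:Z.
Proof.
by rewrite /piM; case: ifP => ?; case: ifP => ?; case: ifP => ?; try case: ifP => ?; lia.
Qed.

Definition zigzag m : seq nat := [seq (piM m t).-1 | t <- iota 1 m].

Definition zigzag_steps m : seq int :=
  [seq if odd t then t%:Z else - t%:Z | t <- iota 1 m.-1].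

Lemma size_zigzag m : size (zigzag m) = m.
Proof. by rewrite size_map size_iota. Qed.

Lemma nth_zigzag m i : (i < m)%N -> nth 0%N (zigzag m) i = (piM m i.+1).-1.
Proof. by move=> i_lt; rewrite (nth_map 0%N) ?size_iota // nth_iota. Qed.

Lemma perm_zigzag m : perm_eq (zigzag m) (iota 0 m).
Proof.
apply: subset_perm_eq; rewrite ?iota_uniq ?size_zigzag ?size_iota //.
  rewrite map_inj_in_uniq ?iota_uniq // => t t' /[!mem_iota] t_in t'_in.
  by have := piM_range t_in; have := piM_range t'_in; have := piM_inj t_in t'_in; lia.
by move=> _ /mapP[t /[!mem_iota] t_in ->]; have := piM_range t_in; lia.
Qed.

Lemma diffs_zigzag m : diffs (zigzag m) = zigzag_steps m.
Proof.
rewrite diffsE size_zigzag /zigzag_steps (iotaDl 1 0) -map_comp.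
apply/eq_in_map => i /[!mem_iota] /= i_lt; rewrite !nth_zigzag; try lia.
have := piM_range (m := m) (t := i.+1); have := piM_range (m := m) (t := i.+2).
by have := piM_step (m := m) (t := i.+1); rewrite /= add0n add1n; case: (odd i) => /=; lia.
Qed.

Lemma zigzag_stepsS k : (0 < k)%N ->
  zigzag_steps k.+1 = rcons (zigzag_steps k) (if odd k then k%:Z else - k%:Z).
Proof.
case: k => // k _; rewrite /zigzag_steps !succnK.
by rewrite -[k.+1]addn1 iotaD map_cat cats1 /= add1n addn1.
Qed.

Lemma perm_zigzag_steps m :
  perm_eq (zigzag_steps m ++ map -%R (zigzag_steps m)) (signed_iota m.-1).
Proof.
have mem_steps x : (x \in zigzag_steps m ++ map -%R (zigzag_steps m)) =
                   (x \in signed_iota m.-1).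
  rewrite mem_cat -[x in _ || (x \in _)]opprK mem_map; last exact: oppr_inj.
  rewrite mem_signed_iota; apply/orP/andP => [[] /mapP[t /[!mem_iota] t_in]|[x_nz x_le]].
  - by case: odd => ->; lia.
  - by case: odd => /eqP; rewrite ?eqr_oppLR => /eqP ->; lia.
  have x_in : absz x \in iota 1 m.-1 by rewrite mem_iota; lia.
  set t := absz x; case: (boolP (x == if odd t then t%:Z else - t%:Z)) => [/eqP x_eq|x_neq].
    by left; apply/mapP; exists t.
  by right; apply/mapP; exists t => //; move: x_neq; case: odd; lia.
have size_steps :
    size (zigzag_steps m ++ map -%R (zigzag_steps m)) = size (signed_iota m.-1).
  by rewrite size_cat size_signed_iota /zigzag_steps !size_map size_iota.
apply: (uniq_perm _ (uniq_signed_iota _) mem_steps).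
by rewrite (uniq_size_uniq (uniq_signed_iota m.-1) (fun x => esym (mem_steps x))) size_steps.
Qed.

(** * Permutation matrices *)

Definition graph_mx m n (s : seq nat) : 'M[int]_(m, n) :=
  \matrix_(i, j) (nth 0%N s i == j)%:R.

Lemma graph_mxE m n s i j : graph_mx m n s i j = (nth 0%N s i == j)%:R.
Proof. by rewrite mxE. Qed.

Lemma Pmx_graph n (p : 'S_n) : Pmx p = graph_mx n n (perm_vals p).
Proof. by apply/matrixP => i j; rewrite graph_mxE nth_perm_vals /Pmx /perm_mx !mxE. Qed.

Lemma PiMx_graph m : PiMx m = graph_mx m m (zigzag m).
Proof.
apply/matrixP => i j; rewrite graph_mxE nth_zigzag // mxE.
have := piM_range (m := m) (t := i.+1); rewrite /= ltn_ord => /(_ isT) range.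
by do 2 case: eqP => ? //; exfalso; lia.
Qed.

Lemma mulLmxE m n (A : 'M[int]_(m, n)) i j : (Lmx m *m A) i j = A (rev_ord i) j.
Proof.
rewrite !mxE (bigD1 (rev_ord i)) //= mxE big1 ?addr0 => [|k k_neq].
  by rewrite (_ : (i + _ == _)%N) ?mul1r //=; have := ltn_ord i; lia.
rewrite mxE (_ : (i + k == m.-1)%N = false) ?mul0r //.
by apply: contraNF k_neq => /eqP ?; apply/eqP/val_inj => /=; have := ltn_ord i; lia.
Qed.

Lemma mulmxLE m n (A : 'M[int]_(m, n)) i j : (A *m Lmx n) i j = A i (rev_ord j).
Proof.
rewrite !mxE (bigD1 (rev_ord j)) //= mxE big1 ?addr0 => [|k k_neq].
  by rewrite (_ : (_ + j == _)%N) ?mulr1 //=; have := ltn_ord j; lia.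
rewrite mxE (_ : (k + j == n.-1)%N = false) ?mulr0 //.
by apply: contraNF k_neq => /eqP ?; apply/eqP/val_inj => /=; have := ltn_ord j; lia.
Qed.

Lemma mulLmx_graph m n s : size s = m -> Lmx m *m graph_mx m n s = graph_mx m n (rev s).
Proof.
by move=> s_size; apply/matrixP => i j; rewrite mulLmxE !graph_mxE nth_rev ?s_size.
Qed.

Lemma mulmxL_graph m n s : size s = m -> {in s, forall v, v < n}%N ->
  graph_mx m n s *m Lmx n = graph_mx m n (map (subn n.-1) s).
Proof.
move=> s_size s_lt; apply/matrixP => i j.
rewrite mulmxLE !graph_mxE (nth_map 0%N) ?s_size //=.
have v_lt : (nth 0%N s i < n)%N by apply/s_lt/mem_nth; rewrite s_size.
have j_lt := ltn_ord j; rewrite /=.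
by do 2 case: eqP => ? //; exfalso; lia.
Qed.

Lemma block_graph_mx m1 m2 n1 n2 s1 s2 :
  size s1 = m1 -> size s2 = m2 -> {in s1, forall v, v < n1}%N ->
  block_mx (graph_mx m1 n1 s1) 0 0 (graph_mx m2 n2 s2) =
  graph_mx (m1 + m2) (n1 + n2) (s1 ++ map (addn n1) s2).
Proof.
move=> s1_size s2_size s1_lt; apply/matrixP => i j; rewrite graph_mxE nth_cat s1_size.
case: (split_ordP i) => {}i ->; case: (split_ordP j) => {}j ->;
  rewrite ?block_mxEul ?block_mxEur ?block_mxEdl ?block_mxEdr ?graph_mxE ?mxE /=.
- by [].
- have v_lt : (nth 0%N s1 i < n1)%N by apply/s1_lt/mem_nth; rewrite s1_size.
  by case: eqP => // ?; exfalso; lia.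
- have j_lt := ltn_ord j.
  by rewrite addKn (nth_map 0%N) ?s2_size //; case: eqP => // ?; exfalso; lia.
- by rewrite addKn (nth_map 0%N) ?s2_size // eqn_add2l.
Qed.

Lemma antiblock_graph_mx m1 m2 n1 n2 s1 s2 :
  size s1 = m1 -> size s2 = m2 -> {in s2, forall v, v < n1}%N ->
  castmx (erefl (m1 + m2), addnC n1 n2)
    (block_mx 0 (graph_mx m1 n2 s1) (graph_mx m2 n1 s2) 0) =
  graph_mx (m1 + m2) (n2 + n1) (map (addn n1) s1 ++ s2).
Proof.
move=> s1_size s2_size s2_lt; apply/matrixP => i j.
rewrite castmxE graph_mxE nth_cat size_map s1_size.
set i' := cast_ord _ i; set j' := cast_ord _ j.
rewrite -[val i]/(val i') -[val j]/(val j'); clearbody i' j'; clear i j.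
case: (split_ordP i') => {}i ->; case: (split_ordP j') => {}j ->;
  rewrite ?block_mxEul ?block_mxEur ?block_mxEdl ?block_mxEdr ?graph_mxE ?mxE /=.
- have j_lt := ltn_ord j.
  by rewrite (nth_map 0%N) ?s1_size //; case: eqP => // ?; exfalso; lia.
- by rewrite (nth_map 0%N) ?s1_size // eqn_add2l.
- by rewrite addKn.
- have v_lt : (nth 0%N s2 i < n1)%N by apply/s2_lt/mem_nth; rewrite s2_size.
  by rewrite addKn; case: eqP => // ?; exfalso; lia.
Qed.

(** * The optimal permutations *)

Lemma perm_iota_cat n1 n2 s1 s2 : perm_eq s1 (iota 0 n1) -> perm_eq s2 (iota 0 n2) ->
  perm_eq (s1 ++ map (addn n1) s2) (iota 0 (n1 + n2)).
Proof.
move=> s1_perm s2_perm; rewrite iotaD add0n -[in iota n1 _](addn0 n1) iotaDl.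
by apply: perm_cat => //; exact: perm_map.
Qed.

Lemma perm_iota_subn n s : perm_eq s (iota 0 n) -> perm_eq (map (subn n.-1) s) (iota 0 n).
Proof.
move=> s_perm; apply: perm_trans (perm_map _ s_perm) _.
have -> : map (subn n.-1) (iota 0 n) = rev (iota 0 n).
  apply: (@eq_from_nth _ 0%N); rewrite ?size_map ?size_rev ?size_iota // => i i_lt.
  by rewrite (nth_map 0%N) ?nth_rev ?size_iota // !nth_iota; lia.
by rewrite perm_rev.
Qed.

Lemma perm_cat_cons (T : eqType) (s t : seq T) x : perm_eq (s ++ x :: t) (x :: s ++ t).
Proof. by rewrite -cat1s perm_catCA. Qed.

Lemma mem_zigzag m v : (v \in zigzag m) = (v < m)%N.
Proof. by rewrite (perm_mem (perm_zigzag m)) mem_iota. Qed.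

Definition pistar_i k : seq nat := zigzag k ++ map (addn k) (rev (zigzag k)).

Lemma perm_pistar_i k : perm_eq (pistar_i k) (iota 0 (k + k)).
Proof. by rewrite perm_iota_cat ?perm_rev ?perm_zigzag. Qed.

Lemma diffs_pistar_i k : (0 < k)%N ->
  perm_eq (diffs (pistar_i k)) (k%:Z :: signed_iota k.-1).
Proof.
move=> k_gt0; rewrite diffs_cat -?size_eq0 ?size_map ?size_rev ?size_zigzag ?size_iota -?lt0n //.
rewrite diffs_map_addn diffs_rev diffs_zigzag -nth0 -nth_last.
rewrite (nth_map 0%N) ?nth_rev ?size_rev ?size_zigzag // subn1 PoszD addrK.
apply: perm_trans (perm_cat_cons _ _ _) _; rewrite perm_cons.
by apply: perm_trans (perm_zigzag_steps k); rewrite perm_cat2l perm_rev.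
Qed.

Lemma graph_pistar_i k :
  block_mx (PiMx k) 0 0 (Lmx k *m PiMx k) = graph_mx (k + k) (k + k) (pistar_i k).
Proof.
rewrite PiMx_graph mulLmx_graph ?size_zigzag // block_graph_mx ?size_rev ?size_zigzag //.
by move=> v; rewrite mem_zigzag.
Qed.

Definition pistar_ii k : seq nat := map (addn k) (rev (zigzag k.+1)) ++ zigzag k.

Lemma perm_pistar_ii k : perm_eq (pistar_ii k) (iota 0 (k.+1 + k)).
Proof. by rewrite perm_catC addnC perm_iota_cat ?perm_rev ?perm_zigzag. Qed.

Lemma diffs_pistar_ii k : (0 < k)%N -> ~~ odd k ->
  perm_eq (diffs (pistar_ii k)) [:: k%:Z, - k.+1%:Z & signed_iota k.-1].
Proof.
move=> k_gt0 k_even.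
have junction : (head 0%N (zigzag k))%:Z -
                (last 0%N (map (addn k) (rev (zigzag k.+1))))%:Z = - k.+1%:Z.
  rewrite -nth0 -nth_last size_map size_rev size_zigzag /=.
  by rewrite (nth_map 0%N) ?nth_rev ?size_rev ?size_zigzag // subnn !nth_zigzag // !piM1; lia.
rewrite diffs_cat -?size_eq0 ?size_map ?size_rev ?size_zigzag ?size_iota -?lt0n // junction.
rewrite diffs_map_addn diffs_rev !diffs_zigzag zigzag_stepsS // (negbTE k_even).
rewrite map_rcons opprK rev_rcons cat_cons perm_cons.
apply: perm_trans (perm_cat_cons _ _ _) _; rewrite perm_cons perm_catC.
by apply: perm_trans (perm_zigzag_steps k); rewrite perm_cat2l perm_rev.
Qed.

Lemma graph_pistar_ii k :
  castmx (erefl (k.+1 + k), addnC k k.+1)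
    (block_mx (0 : 'M[int]_(k.+1, k)) (Lmx k.+1 *m PiMx k.+1)
              (PiMx k) (0 : 'M[int]_(k, k.+1))) =
  graph_mx (k.+1 + k) (k.+1 + k) (pistar_ii k).
Proof.
rewrite !PiMx_graph mulLmx_graph ?size_zigzag // antiblock_graph_mx ?size_rev ?size_zigzag //.
by move=> v; rewrite mem_zigzag.
Qed.

Definition pistar_iii k : seq nat :=
  map (addn k) (map (subn k) (rev (zigzag k.+1))) ++ map (subn k.-1) (zigzag k).

Lemma perm_pistar_iii k : perm_eq (pistar_iii k) (iota 0 (k.+1 + k)).
Proof.
rewrite perm_catC addnC perm_iota_cat ?perm_iota_subn ?perm_zigzag //.
by rewrite (perm_iota_subn (n := k.+1)) // perm_rev perm_zigzag.
Qed.

Lemma diffs_pistar_iii k : odd k ->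
  perm_eq (diffs (pistar_iii k)) [:: k%:Z, - k.+1%:Z & signed_iota k.-1].
Proof.
move=> k_odd; have k_gt0 : (0 < k)%N by case: k k_odd.
have junction : (head 0%N (map (subn k.-1) (zigzag k)))%:Z -
                (last 0%N (map (addn k) (map (subn k) (rev (zigzag k.+1)))))%:Z = - k.+1%:Z.
  rewrite -!nth0 -nth_last !size_map size_rev size_zigzag /=.
  rewrite (nth_map 0%N) ?size_zigzag // nth_zigzag //.
  rewrite (nth_map 0%N) ?size_map ?size_rev ?size_zigzag //.
  rewrite (nth_map 0%N) ?size_rev ?size_zigzag //.
  by rewrite nth_rev ?size_zigzag // subnn nth_zigzag // !piM1; lia.
rewrite diffs_cat -?size_eq0 ?size_map ?size_rev ?size_zigzag ?size_iota -?lt0n // junction.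
have z_le : {in zigzag k, forall v, v <= k.-1}%N by move=> v; rewrite mem_zigzag; lia.
have z1_le : {in rev (zigzag k.+1), forall v, v <= k}%N by move=> v; rewrite mem_rev mem_zigzag.
rewrite diffs_map_addn !diffs_map_subn //.
rewrite diffs_rev !diffs_zigzag zigzag_stepsS // k_odd map_rev (mapK opprK) rev_rcons.
rewrite cat_cons perm_cons; apply: perm_trans (perm_cat_cons _ _ _) _; rewrite perm_cons.
by apply: perm_trans (perm_zigzag_steps k); rewrite perm_cat2r perm_rev.
Qed.

Lemma graph_pistar_iii k :
  castmx (erefl (k.+1 + k), addnC k k.+1)
    (block_mx (0 : 'M[int]_(k.+1, k)) (Lmx k.+1 *m PiMx k.+1 *m Lmx k.+1)
              (PiMx k *m Lmx k) (0 : 'M[int]_(k, k.+1))) =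
  graph_mx (k.+1 + k) (k.+1 + k) (pistar_iii k).
Proof.
rewrite !PiMx_graph mulLmx_graph ?size_zigzag //.
rewrite !mulmxL_graph ?size_rev ?size_zigzag //; last 2 first.
- by move=> v; rewrite mem_zigzag.
- by move=> v; rewrite mem_rev mem_zigzag.
rewrite antiblock_graph_mx ?size_map ?size_rev ?size_zigzag ?size_iota // => v /mapP[u].
by rewrite mem_zigzag => u_lt ->; lia.
Qed.

Local Close Scope ring_scope.

Lemma optimal_of_dderiv_even k (p : 'S_(k + k)) : (0 < k)%N ->
  perm_eq (dderiv p) (k%:Z :: signed_iota k.-1)%R ->
  costas1 p /\ locvar p = (k + k).+1 %/ 2 /\
  (forall q : 'S_(k + k), costas1 q -> (globvar p <= globvar q)%N) /\
  4 * globvar p = (k + k) ^ 2.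
Proof.
move=> k_gt0 D_perm.
have p_costas : costas1 p.
  by rewrite /costas1 (perm_uniq D_perm) /= uniq_signed_iota mem_signed_iota andbT; lia.
have loc_le : (locvar p <= k)%N.
  rewrite /locvar (perm_big _ D_perm) big_cons /= geq_max leqnn.
  exact: leq_trans (max_absz_signed_iota _) (leq_pred _).
have glob : globvar p = (k * k)%N.
  by rewrite /globvar (perm_big _ D_perm) big_cons /= sum_absz_signed_iota prednK //; nia.
have := costas1_locvar_ge (n := k + k) _ p_costas.
have -> : (k + k).+1 %/ 2 = k by lia.
split=> //; split; first by apply/eqP; rewrite eqn_leq loc_le; lia.
split; first by move=> q /(globvar_ge_even k_gt0); rewrite glob.
by rewrite glob; nia.
Qed.

Lemma optimal_of_dderiv_odd k (p : 'S_(k.+1 + k)) : (0 < k)%N ->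
  perm_eq (dderiv p) [:: k%:Z, - k.+1%:Z & signed_iota k.-1]%R ->
  costas1 p /\ locvar p = (k.+1 + k).+1 %/ 2 /\
  (forall q : 'S_(k.+1 + k), costas1 q -> (globvar p <= globvar q)%N) /\
  4 * globvar p = (k.+1 + k) ^ 2 + 3.
Proof.
move=> k_gt0 D_perm.
have p_costas : costas1 p.
  rewrite /costas1 (perm_uniq D_perm) /= uniq_signed_iota andbT !inE !mem_signed_iota.
  by rewrite abszN /=; lia.
have loc_le : (locvar p <= k.+1)%N.
  rewrite /locvar (perm_big _ D_perm) !big_cons /= !geq_max leqnn.
  by rewrite (leq_trans (max_absz_signed_iota _)) //; lia.
have glob : globvar p = (k * k.+1 + 1)%N.
  by rewrite /globvar (perm_big _ D_perm) !big_cons /= sum_absz_signed_iota prednK //; nia.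
have := costas1_locvar_ge (n := k.+1 + k) _ p_costas.
have -> : (k.+1 + k).+1 %/ 2 = k.+1 by lia.
split=> //; split; first by apply/eqP; rewrite eqn_leq loc_le; lia.
split; first by move=> q /(globvar_ge_odd k_gt0); rewrite glob.
by rewrite glob; nia.
Qed.

Lemma exists_pistar_i k : 0 < k -> exists p : 'S_(k + k),
  Pmx p = block_mx (PiMx k) 0%R 0%R (Lmx k *m PiMx k)%R /\
  costas1 p /\ locvar p = (k + k).+1 %/ 2 /\
  (forall q : 'S_(k + k), costas1 q -> globvar p <= globvar q) /\
  4 * globvar p = (k + k) ^ 2.
Proof.
move=> k_gt0; have [p p_vals] := perm_of_seq (perm_pistar_i k).
exists p; rewrite Pmx_graph p_vals graph_pistar_i; split=> //.
by apply: optimal_of_dderiv_even; rewrite // dderiv_diffs p_vals diffs_pistar_i.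
Qed.

Lemma exists_pistar_ii k : 0 < k -> ~~ odd k -> exists p : 'S_(k.+1 + k),
  Pmx p = castmx (erefl (k.+1 + k), addnC k k.+1)
            (block_mx (0%R : 'M[int]_(k.+1, k)) (Lmx k.+1 *m PiMx k.+1)%R
                      (PiMx k) (0%R : 'M[int]_(k, k.+1))) /\
  costas1 p /\ locvar p = (k.+1 + k).+1 %/ 2 /\
  (forall q : 'S_(k.+1 + k), costas1 q -> globvar p <= globvar q) /\
  4 * globvar p = (k.+1 + k) ^ 2 + 3.
Proof.
move=> k_gt0 k_even; have [p p_vals] := perm_of_seq (perm_pistar_ii k).
exists p; rewrite Pmx_graph p_vals graph_pistar_ii; split=> //.
by apply: optimal_of_dderiv_odd; rewrite // dderiv_diffs p_vals diffs_pistar_ii.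
Qed.

Lemma exists_pistar_iii k : odd k -> exists p : 'S_(k.+1 + k),
  Pmx p = castmx (erefl (k.+1 + k), addnC k k.+1)
            (block_mx (0%R : 'M[int]_(k.+1, k)) (Lmx k.+1 *m PiMx k.+1 *m Lmx k.+1)%R
                      (PiMx k *m Lmx k)%R (0%R : 'M[int]_(k, k.+1))) /\
  costas1 p /\ locvar p = (k.+1 + k).+1 %/ 2 /\
  (forall q : 'S_(k.+1 + k), costas1 q -> globvar p <= globvar q) /\
  4 * globvar p = (k.+1 + k) ^ 2 + 3.
Proof.
move=> k_odd; have k_gt0 : 0 < k by case: k k_odd.
have [p p_vals] := perm_of_seq (perm_pistar_iii k).
exists p; rewrite Pmx_graph p_vals graph_pistar_iii; split=> //.
by apply: optimal_of_dderiv_odd; rewrite // dderiv_diffs p_vals diffs_pistar_iii.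
Qed.

Lemma exists_costas1_locvar n : 2 <= n ->
  exists p : 'S_n, costas1 p /\ locvar p = n.+1 %/ 2.
Proof.
move=> n_ge2; have [k [n_even|n_odd]] : exists k, n = k + k \/ n = k.+1 + k.
  by exists n./2; case: (boolP (odd n)) => n_par; [right | left]; lia.
- subst n; have [|p [_ [p_costas [p_loc _]]]] := exists_pistar_i (k := k); first lia.
  by exists p.
- subst n; have k_gt0 : 0 < k by lia.
  case: (boolP (odd k)) => k_par.
  + by have [p [_ [p_costas [p_loc _]]]] := exists_pistar_iii k_par; exists p.
  + by have [p [_ [p_costas [p_loc _]]]] := exists_pistar_ii k_gt0 k_par; exists p.
Qed.

Theorem theorem3p2 :
  (* lower bound on the local variation *)
  (forall n : nat, (2 <= n)%N -> forall p : 'S_n,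
      costas1 p -> (n.+1 %/ 2 <= locvar p)%N) /\
  (* existence of an optimal 1-Costas permutation *)
  (forall n : nat, (2 <= n)%N -> exists p : 'S_n,
      costas1 p /\ locvar p = n.+1 %/ 2) /\
  (* (i) n = 2k *)
  (forall k : nat, (0 < k)%N -> exists p : 'S_(k + k),
      Pmx p = block_mx (PiMx k) 0%R 0%R (Lmx k *m PiMx k)%R /\
      costas1 p /\ locvar p = (k + k).+1 %/ 2 /\
      (forall q : 'S_(k + k), costas1 q -> (globvar p <= globvar q)%N) /\
      4 * globvar p = (k + k) ^ 2) /\
  (* (ii) n = 2k+1, k even *)
  (forall k : nat, (0 < k)%N -> ~~ odd k -> exists p : 'S_(k.+1 + k),
      Pmx p = castmx (erefl (k.+1 + k), addnC k k.+1)
                (block_mx (0%R : 'M[int]_(k.+1, k)) (Lmx k.+1 *m PiMx k.+1)%R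
                          (PiMx k) (0%R : 'M[int]_(k, k.+1))) /\
      costas1 p /\ locvar p = (k.+1 + k).+1 %/ 2 /\
      (forall q : 'S_(k.+1 + k), costas1 q -> (globvar p <= globvar q)%N) /\
      4 * globvar p = (k.+1 + k) ^ 2 + 3) /\
  (* (iii) n = 2k+1, k odd *)
  (forall k : nat, odd k -> exists p : 'S_(k.+1 + k),
      Pmx p = castmx (erefl (k.+1 + k), addnC k k.+1)
                (block_mx (0%R : 'M[int]_(k.+1, k)) (Lmx k.+1 *m PiMx k.+1 *m Lmx k.+1)%R
                          (PiMx k *m Lmx k)%R (0%R : 'M[int]_(k, k.+1))) /\
      costas1 p /\ locvar p = (k.+1 + k).+1 %/ 2 /\
      (forall q : 'S_(k.+1 + k), costas1 q -> (globvar p <= globvar q)%N) /\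
      4 * globvar p = (k.+1 + k) ^ 2 + 3).
Proof.
split; first by move=> n n_ge2 p; exact: costas1_locvar_ge.
split; first exact: exists_costas1_locvar.
split; first exact: exists_pistar_i.
split; first exact: exists_pistar_ii.
exact: exists_pistar_iii.
Qed.
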